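(* Let $g\ge2$, $\sigma\in\mathrm{Spin}(\Sigma_g)$ and $B$ a symplectic basis of $H_1(\Sigma_g;\mathbb{Z}/2)$. The $\mathbb{Z}/8$-submodule of $\mathrm{Map}(H_1(\Sigma_g;\mathbb{Z}/2),\mathbb{Z}/8)$ spanned by the functions $\overline{C}$, $C\in H_1(\Sigma_g;\mathbb{Z}/2)$ (which is the image of Sato's homomorphism $\beta_\sigma$) equals the internal direct sum $$\bigoplus_{X\in B}\mathbb{Z}/8\cdot\overline{X}\ \oplus\bigoplus_{\{X,Y\}\subset B}\mathbb{Z}/8\cdot 2\overline{X}\,\overline{Y}\ \oplus\bigoplus_{\{X,Y,Z\}\subset B}\mathbb{Z}/8\cdot4\overline{X}\,\overline{Y}\,\overline{Z}\ \cong(\mathbb{Z}/8)^{2g}\oplus(\mathbb{Z}/4)^{\binom{2g}{2}}\oplus(\mathbb{Z}/2)^{\binom{2g}{3}},$$ the sums running over subsets of distinct elements of $B$.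
   Context: $\Sigma_g$ is a closed oriented genus $g$ surface. To $\sigma\in\mathrm{Spin}(\Sigma_g)$ is associated (Johnson) a quadratic form $q_\sigma:H_1(\Sigma_g;\mathbb{Z}/2)\to\mathbb{Z}/2$, $q_\sigma(y+z)=q_\sigma(y)+q_\sigma(z)+y\cdot z$. For $z\in H_1(\Sigma_g;\mathbb{Z}/2)$, $i_z(y)=1\in\mathbb{Z}/8$ if $z\cdot y\equiv1\pmod2$ and $0$ otherwise. $\overline{C}:=(-1)^{q_\sigma(C)}i_C\in\mathrm{Map}(H_1(\Sigma_g;\mathbb{Z}/2),\mathbb{Z}/8)$, a $\mathbb{Z}/8$-algebra under pointwise operations. Sato's homomorphism $\beta_\sigma:\mathrm{Mod}_{g,1}[2]\to\mathrm{Map}(H_1(\Sigma_g;\mathbb{Z}/2),\mathbb{Z}/8)$ satisfies $\beta_\sigma(t_c^2)=\overline{[c]}$ for non-separating simple closed curves $c$, and $\mathrm{Mod}_{g,1}[2]$ (the level 2 subgroup of the mapping class group of $\Sigma_g$ rel a disc) is generated by such squares. A symplectic basis satisfies $A_i\cdot B_j=\delta_{ij}$, $A_i\cdot A_j=B_i\cdot B_j=0$. *)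

From HB Require Import structures.
From mathcomp Require Import all_boot all_order all_algebra.
Set Implicit Arguments. Unset Strict Implicit. Unset Printing Implicit Defensive.
Import Order.TTheory GRing.Theory Num.Theory.
Local Open Scope ring_scope.

(* H_1(Sigma_g; Z/2) modelled as (F_2)^(g+g); coordinates 0..g-1 and g..2g-1
   with the standard (symplectic) intersection form. *)
Definition H1 (g : nat) := 'rV['F_2]_(g + g).

Definition iform (g : nat) (x y : H1 g) : 'F_2 :=
  \sum_(i < g) (x 0 (lshift g i) * y 0 (rshift g i)
              + x 0 (rshift g i) * y 0 (lshift g i)).

(* Johnson: spin structures <-> quadratic refinements of the intersection form. *)
Definition quad_form (g : nat) (q : H1 g -> 'F_2) : Prop :=
  forall y z : H1 g, q (y + z) = q y + q z + iform y z.

(* A symplectic basis indexed by 'I_(g+g): e (lshift i) = A_i, e (rshift i) = B_i. *)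
Definition symplectic_basis (g : nat) (e : 'I_(g + g) -> H1 g) : Prop :=
  (forall i j : 'I_g, iform (e (lshift g i)) (e (rshift g j)) = (i == j)%:R) /\
  (forall i j : 'I_g, iform (e (lshift g i)) (e (lshift g j)) = 0) /\
  (forall i j : 'I_g, iform (e (rshift g i)) (e (rshift g j)) = 0).

Definition Map (g : nat) := H1 g -> 'Z_8.

Definition i_fun (g : nat) (z : H1 g) : Map g :=
  fun y => if iform z y == 1 then 1 else 0.

Definition Cbar (g : nat) (q : H1 g -> 'F_2) (C : H1 g) : Map g :=
  fun y => (if q C == 1 then -1 else 1) * i_fun C y.

Definition span_Cbar (g : nat) (q : H1 g -> 'F_2) (f : Map g) : Prop :=
  exists a : H1 g -> 'Z_8, forall y, f y = \sum_(C : H1 g) a C * Cbar q C y.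

Definition gen1 (g : nat) q (e : 'I_(g+g) -> H1 g) (i : 'I_(g+g)) : Map g :=
  fun y => Cbar q (e i) y.
Definition gen2 (g : nat) q (e : 'I_(g+g) -> H1 g) (i j : 'I_(g+g)) : Map g :=
  fun y => 2%:R * (Cbar q (e i) y * Cbar q (e j) y).
Definition gen3 (g : nat) q (e : 'I_(g+g) -> H1 g) (i j k : 'I_(g+g)) : Map g :=
  fun y => 4%:R * (Cbar q (e i) y * Cbar q (e j) y * Cbar q (e k) y).

Definition combo (g : nat) q (e : 'I_(g+g) -> H1 g)
  (a : 'I_(g+g) -> 'Z_8) (b : 'I_(g+g) -> 'I_(g+g) -> 'Z_8)
  (c : 'I_(g+g) -> 'I_(g+g) -> 'I_(g+g) -> 'Z_8) : Map g :=
  fun y => \sum_(i : 'I_(g+g)) a i * gen1 q e i y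
         + \sum_(i : 'I_(g+g)) \sum_(j : 'I_(g+g) | (i < j)%N) b i j * gen2 q e i j y
         + \sum_(i : 'I_(g+g)) \sum_(j : 'I_(g+g) | (i < j)%N) \sum_(k : 'I_(g+g) | (j < k)%N) c i j k * gen3 q e i j k y.

Definition has_order (g : nat) (v : Map g) (m : nat) : Prop :=
  forall n : nat, (forall y, v y *+ n = 0) <-> (m %| n)%N.

(* For y in H_1 put u_k := i_{e_k}(y) in {0, 1}.  If C = sum_k s_k e_k then i_C(y) is
   the parity of sum_{s_k = 1} u_k, and in Z/8 the parity of a sum of bits x_k is
   e1(x) - 2 e2(x) + 4 e3(x): the inclusion-exclusion terms (-2)^(m-1) e_m(x) vanish for
   m >= 4.  As Cbar_X = +-i_X, every Cbar_C is a combination of the Xbar, 2 Xbar Ybar and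
   4 Xbar Ybar Zbar, X, Y, Z in B; conversely 2 i_X i_Y = i_X + i_Y - i_(X+Y), and a
   similar identity for triples, put these generators in the span.  Since B is a basis
   with a dual basis, (u_k)_k runs over all of {0,1}^(2g) as y varies, and a multilinear
   cubic polynomial over Z/8 vanishing there has zero coefficients (evaluate at vectors
   with one, two and three ones).  This gives directness; evaluating at the y with all
   u_k = 1 gives the orders 8, 4, 2. *)

From mathcomp Require Import all_boot all_order all_algebra.
From mathcomp Require Import ring zify.
Import GRing.Theory.
Local Open Scope ring_scope.
Set Implicit Arguments. Unset Strict Implicit.

Section Span.
Variables (R : pzRingType) (T : Type) (I : finType) (F : I -> T -> R).

Definition in_span (f : T -> R) :=
  exists a : I -> R, forall y, f y = \sum_i a i * F i y.

Lemma in_span_ext (f h : T -> R) : f =1 h -> in_span h -> in_span f.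
Proof. by move=> efh [a ha]; exists a => y; rewrite efh. Qed.

Lemma in_span_gen i : in_span (F i).
Proof.
exists (fun j => (j == i)%:R) => y.
by rewrite (bigD1 i) //= eqxx mul1r big1 ?addr0 // => j /negbTE ->; rewrite mul0r.
Qed.

Lemma in_span0 : in_span (fun=> 0).
Proof. by exists (fun=> 0) => y; rewrite big1 // => i _; rewrite mul0r. Qed.

Lemma in_span_add (f h : T -> R) :
  in_span f -> in_span h -> in_span (fun y => f y + h y).
Proof.
move=> [a ha] [b hb]; exists (fun i => a i + b i) => y.
by rewrite ha hb -big_split; apply: eq_bigr => i _; rewrite mulrDl.
Qed.

Lemma in_span_scale r (f : T -> R) : in_span f -> in_span (fun y => r * f y).
Proof.
move=> [a ha]; exists (fun i => r * a i) => y.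
by rewrite ha mulr_sumr; apply: eq_bigr => i _; rewrite mulrA.
Qed.

Lemma in_span_sum J (s : seq J) (P : pred J) (h : J -> T -> R) :
  (forall j, P j -> in_span (h j)) -> in_span (fun y => \sum_(j <- s | P j) h j y).
Proof.
move=> hs; elim: s => [|j s IHs].
  by apply: in_span_ext in_span0 => y; rewrite big_nil.
rewrite /=; case Pj: (P j).
  by apply: in_span_ext (in_span_add (hs j Pj) IHs) => y; rewrite big_cons Pj.
by apply: in_span_ext IHs => y; rewrite big_cons Pj.
Qed.

End Span.

Section IncreasingTuples.
Variable V : nmodType.

Lemma big_ord_lt2_recr n (F : 'I_n.+1 -> 'I_n.+1 -> V) :
  \sum_(i < n.+1) \sum_(j < n.+1 | (i < j)%N) F i j =
  \sum_(i < n) \sum_(j < n | (i < j)%N) F (widen_ord (leqnSn n) i) (widen_ord (leqnSn n) j)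
  + \sum_(i < n) F (widen_ord (leqnSn n) i) ord_max.
Proof.
rewrite big_ord_recr /= [X in _ + X]big1 ?addr0; last first.
  by move=> j /=; rewrite ltnNge -ltnS ltn_ord.
rewrite -big_split /=; apply: eq_bigr => i _.
by rewrite big_mkcond big_ord_recr /= ltn_ord -big_mkcond.
Qed.

Lemma big_ord_lt3_recr n (F : 'I_n.+1 -> 'I_n.+1 -> 'I_n.+1 -> V) :
  \sum_(i < n.+1) \sum_(j < n.+1 | (i < j)%N) \sum_(k < n.+1 | (j < k)%N) F i j k =
  \sum_(i < n) \sum_(j < n | (i < j)%N) \sum_(k < n | (j < k)%N)
    F (widen_ord (leqnSn n) i) (widen_ord (leqnSn n) j) (widen_ord (leqnSn n) k)
  + \sum_(i < n) \sum_(j < n | (i < j)%N) F (widen_ord (leqnSn n) i) (widen_ord (leqnSn n) j) ord_max.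
Proof.
rewrite big_ord_lt2_recr [X in _ + X]big1 ?addr0; last first.
  by move=> i _; apply: big1 => k /=; rewrite ltnNge -ltnS ltn_ord.
rewrite -big_split /=; apply: eq_bigr => i _.
rewrite -big_split /=; apply: eq_bigr => j _.
by rewrite big_mkcond big_ord_recr /= ltn_ord -big_mkcond.
Qed.

End IncreasingTuples.

Section Cubic.
Variable R : comRingType.

Definition cubic n (a : 'I_n -> R) (b : 'I_n -> 'I_n -> R)
    (c : 'I_n -> 'I_n -> 'I_n -> R) (x : 'I_n -> R) : R :=
  \sum_(i < n) a i * x i
  + \sum_(i < n) \sum_(j < n | (i < j)%N) b i j * (x i * x j)
  + \sum_(i < n) \sum_(j < n | (i < j)%N) \sum_(k < n | (j < k)%N)
      c i j k * (x i * x j * x k).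

Lemma eq_cubic n (a a' : 'I_n -> R) b b' c c' x :
  (forall i, a i = a' i) -> (forall i j, b i j = b' i j) -> (forall i j k, c i j k = c' i j k) ->
  cubic a b c x = cubic a' b' c' x.
Proof.
move=> ea eb ec; rewrite /cubic; congr (_ + _ + _).
- by apply: eq_bigr => i _; rewrite ea.
- by apply: eq_bigr => i _; apply: eq_bigr => j _; rewrite eb.
- by do 3![apply: eq_bigr => ? _]; rewrite ec.
Qed.

Lemma eq_cubic_var n (a : 'I_n -> R) b c (x x' : 'I_n -> R) :
  x =1 x' -> cubic a b c x = cubic a b c x'.
Proof.
move=> ex; rewrite /cubic; congr (_ + _ + _).
- by apply: eq_bigr => i _; rewrite ex.
- by apply: eq_bigr => i _; apply: eq_bigr => j _; rewrite !ex.
- by do 3![apply: eq_bigr => ? _]; rewrite !ex.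
Qed.

Lemma cubic_suml n J (s : seq J) (r : J -> R) (a : J -> 'I_n -> R) b c x :
  \sum_(m <- s) r m * cubic (a m) (b m) (c m) x =
  cubic (fun i => \sum_(m <- s) r m * a m i) (fun i j => \sum_(m <- s) r m * b m i j)
    (fun i j k => \sum_(m <- s) r m * c m i j k) x.
Proof.
rewrite /cubic; under eq_bigr do rewrite !mulrDr; rewrite !big_split /=.
congr (_ + _ + _).
- under eq_bigr do rewrite mulr_sumr; rewrite exchange_big.
  by apply: eq_bigr => i _; rewrite mulr_suml; apply: eq_bigr => m _; rewrite mulrA.
- under eq_bigr do rewrite mulr_sumr; rewrite exchange_big; apply: eq_bigr => i _.
  under eq_bigr do rewrite mulr_sumr; rewrite exchange_big; apply: eq_bigr => j _.
  by rewrite mulr_suml; apply: eq_bigr => m _; rewrite mulrA.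
- under eq_bigr do rewrite mulr_sumr; rewrite exchange_big; apply: eq_bigr => i _.
  under eq_bigr do rewrite mulr_sumr; rewrite exchange_big; apply: eq_bigr => j _.
  under eq_bigr do rewrite mulr_sumr; rewrite exchange_big; apply: eq_bigr => k _.
  by rewrite mulr_suml; apply: eq_bigr => m _; rewrite mulrA.
Qed.

Lemma cubic_scale_l n r (a : 'I_n -> R) b c x :
  r * cubic a b c x =
  cubic (fun i => r * a i) (fun i j => r * b i j) (fun i j k => r * c i j k) x.
Proof.
have := @cubic_suml n _ [:: tt] (fun=> r) (fun=> a) (fun=> b) (fun=> c) x.
by rewrite big_seq1 => ->; apply: eq_cubic => *; rewrite big_seq1.
Qed.

Lemma cubic_scale_r n (a : 'I_n -> R) b c s x :
  cubic a b c (fun k => s k * x k) =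
  cubic (fun i => a i * s i) (fun i j => b i j * (s i * s j))
    (fun i j k => c i j k * (s i * s j * s k)) x.
Proof.
rewrite /cubic; congr (_ + _ + _).
- by apply: eq_bigr => i _; ring.
- by apply: eq_bigr => i _; apply: eq_bigr => j _; ring.
- by do 3![apply: eq_bigr => ? _]; ring.
Qed.

Lemma natr_addb (a b : bool) :
  ((a (+) b)%:R : R) = a%:R + b%:R - 2%:R * (a%:R * b%:R).
Proof. by case: a; case: b => /=; ring. Qed.

Definition esym2 n (x : 'I_n -> R) :=
  \sum_(i < n) \sum_(j < n | (i < j)%N) x i * x j.
Definition esym3 n (x : 'I_n -> R) :=
  \sum_(i < n) \sum_(j < n | (i < j)%N) \sum_(k < n | (j < k)%N) x i * x j * x k.

Lemma cubic_const n (a b c : R) (x : 'I_n -> R) :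
  cubic (fun=> a) (fun _ _ => b) (fun _ _ _ => c) x =
  a * \sum_i x i + b * esym2 x + c * esym3 x.
Proof.
rewrite /cubic /esym2 /esym3 !mulr_sumr; congr (_ + _ + _).
- by apply: eq_bigr => i _; rewrite mulr_sumr.
- apply: eq_bigr => i _; rewrite mulr_sumr.
  by apply: eq_bigr => j _; rewrite mulr_sumr.
Qed.

Lemma esym2_recr n (x : 'I_n.+1 -> R) :
  esym2 x = esym2 (fun i => x (widen_ord (leqnSn n) i))
            + (\sum_(i < n) x (widen_ord (leqnSn n) i)) * x ord_max.
Proof. by rewrite /esym2 big_ord_lt2_recr mulr_suml. Qed.

Lemma esym3_recr n (x : 'I_n.+1 -> R) :
  esym3 x = esym3 (fun i => x (widen_ord (leqnSn n) i))
            + esym2 (fun i => x (widen_ord (leqnSn n) i)) * x ord_max.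
Proof.
rewrite /esym3 /esym2 big_ord_lt3_recr mulr_suml; congr (_ + _).
by apply: eq_bigr => i _; rewrite mulr_suml.
Qed.

Lemma parity_esym n (b : 'I_n -> bool) : 8%:R = 0 :> R ->
  (odd (\sum_i b i))%:R =
  \sum_i (b i)%:R - 2%:R * esym2 (fun i => (b i)%:R) + 4%:R * esym3 (fun i => (b i)%:R).
Proof.
move=> char8; elim: n b => [|n IHn] b.
  by rewrite /esym2 /esym3 !big_ord0 /= !mulr0 subr0 addr0.
rewrite big_ord_recr /= oddD natr_addb oddb IHn big_ord_recr esym2_recr esym3_recr /=.
set x := (b ord_max)%:R; set e1 := \sum_(i < n) _.
set e2 := esym2 _; set e3 := esym3 _.
(* the two sides differ by [8 * e3 * x] *)
apply/eqP; rewrite -subr_eq0; apply/eqP.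
have -> : e1 - 2%:R * e2 + 4%:R * e3 + x - 2%:R * ((e1 - 2%:R * e2 + 4%:R * e3) * x) -
  (e1 + x - 2%:R * (e2 + e1 * x) + 4%:R * (e3 + e2 * x)) = - (8%:R * (e3 * x)) by ring.
by rewrite char8 mul0r oppr0.
Qed.

Lemma cubic_parity n (b : 'I_n -> bool) : 8%:R = 0 :> R ->
  (odd (\sum_i b i))%:R =
  cubic (fun=> 1) (fun _ _ => - 2%:R) (fun _ _ _ => 4%:R) (fun i => (b i)%:R).
Proof. by move=> char8; rewrite cubic_const parity_esym // mul1r mulNr. Qed.

Lemma cubic_indicatorE n (a : 'I_n -> R) b c (T : {set 'I_n}) :
  cubic a b c (fun k => (k \in T)%:R) =
    \sum_(i in T) a i
  + \sum_(p : 'I_n * 'I_n | (p.1 < p.2)%N && ((p.1 \in T) && (p.2 \in T))) b p.1 p.2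
  + \sum_(t : 'I_n * 'I_n * 'I_n | ((t.1.1 < t.1.2) && (t.1.2 < t.2))%N
              && [&& t.1.1 \in T, t.1.2 \in T & t.2 \in T]) c t.1.1 t.1.2 t.2.
Proof.
rewrite /cubic !pair_big_dep /= [X in _ = X + _ + _]big_mkcond !big_mkcondr /=.
congr (_ + _ + _).
- by apply: eq_bigr => i _; case: (i \in T); rewrite ?mulr1 ?mulr0.
- by apply: eq_bigr => p _; case: (p.1 \in T); case: (p.2 \in T); rewrite ?mulr1 ?mulr0.
- apply: eq_bigr => t _.
  by case: (t.1.1 \in T); case: (t.1.2 \in T); case: (t.2 \in T); rewrite ?mulr1 ?mulr0.
Qed.

Lemma cubic_indicator_eq0 n (a : 'I_n -> R) b c :
  (forall T : {set 'I_n}, cubic a b c (fun k => (k \in T)%:R) = 0) ->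
  [/\ forall i, a i = 0, forall i j : 'I_n, (i < j)%N -> b i j = 0 &
      forall i j k : 'I_n, (i < j)%N -> (j < k)%N -> c i j k = 0].
Proof.
move=> vanish.
have a0 (i : 'I_n) : a i = 0.
  have := vanish [set i]; rewrite cubic_indicatorE big_set1 !big_pred0 ?addr0 //.
  - by move=> [[k l] m] /=; rewrite !inE -!val_eqE /=; lia.
  - by move=> [k l] /=; rewrite !inE -!val_eqE /=; lia.
have b0 (i j : 'I_n) : (i < j)%N -> b i j = 0.
  move=> ij; have := vanish [set i; j].
  rewrite cubic_indicatorE big1 ?add0r; last by move=> k _; exact: a0.
  rewrite (big_pred1 (i, j)) ?big_pred0 ?addr0 //.
  - by move=> [[k l] m] /=; rewrite !inE -!val_eqE /=; lia.
  - by move=> [k l] /=; rewrite !inE xpair_eqE -!val_eqE /=; lia.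
split=> // i j k ij jk; have := vanish [set i; j; k].
rewrite cubic_indicatorE big1 ?add0r; last by move=> l _; exact: a0.
rewrite big1 ?add0r; last by move=> p /andP[lt _]; exact: b0.
rewrite (big_pred1 (i, j, k)) //.
by move=> [[l m] o] /=; rewrite !inE !xpair_eqE -!val_eqE /=; lia.
Qed.

End Cubic.

Section IntersectionForm.
Variable g : nat.
Implicit Types (x y z : H1 g) (u v : 'F_2).

Lemma F2_eq1D u v : (u + v == 1) = (u == 1) (+) (v == 1).
Proof. by case: u => [[|[|//]] ?]; case: v => [[|[|//]] ?]. Qed.

Lemma F2_eq1M u v : (u * v == 1) = (u == 1) && (v == 1).
Proof. by case: u => [[|[|//]] ?]; case: v => [[|[|//]] ?]. Qed.

Lemma F2_eq1_sum I (r : seq I) (F : I -> 'F_2) :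
  (\sum_(i <- r) F i == 1) = odd (\sum_(i <- r) (F i == 1%R)).
Proof.
elim: r => [|i r IHr]; first by rewrite !big_nil.
by rewrite !big_cons F2_eq1D IHr oddD oddb.
Qed.

Lemma iformC x y : iform x y = iform y x.
Proof. by rewrite /iform; apply: eq_bigr => i _; ring. Qed.

Lemma iformDl x y z : iform (x + y) z = iform x z + iform y z.
Proof. by rewrite /iform -big_split /=; apply: eq_bigr => i _; rewrite !mxE; ring. Qed.

Lemma iform_suml I (r : seq I) (c : I -> 'F_2) (v : I -> H1 g) z :
  iform (\sum_(i <- r) c i *: v i) z = \sum_(i <- r) c i * iform (v i) z.
Proof.
rewrite /iform; under eq_bigr do rewrite !summxE !mulr_suml -big_split /=.
rewrite exchange_big; apply: eq_bigr => i _; rewrite mulr_sumr.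
by apply: eq_bigr => l _; rewrite !mxE; ring.
Qed.

Lemma i_funE z y : i_fun z y = (iform z y == 1)%:R.
Proof. by rewrite /i_fun; case: (_ == 1). Qed.

Lemma i_funD x z y : i_fun (x + z) y = i_fun x y + i_fun z y - 2%:R * (i_fun x y * i_fun z y).
Proof. by rewrite !i_funE iformDl F2_eq1D natr_addb. Qed.

End IntersectionForm.

Section SymplecticBasis.
Variables (g : nat) (e : 'I_(g + g) -> H1 g).
Hypothesis e_sympl : symplectic_basis e.

Definition dual (k : 'I_(g + g)) : 'I_(g + g) :=
  match split k with inl i => rshift g i | inr i => lshift g i end.

Lemma dual_lshift (i : 'I_g) : dual (lshift g i) = rshift g i.
Proof. by rewrite /dual (unsplitK (inl _ i)). Qed.

Lemma dual_rshift (i : 'I_g) : dual (rshift g i) = lshift g i.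
Proof. by rewrite /dual (unsplitK (inr _ i)). Qed.

Lemma dualK : involutive dual.
Proof.
move=> k; rewrite -(splitK k); case: (split k) => i /=.
  by rewrite dual_lshift dual_rshift.
by rewrite dual_rshift dual_lshift.
Qed.

Lemma iform_basis k l : iform (e k) (e l) = (k == dual l)%:R.
Proof.
have [AB [AA BB]] := e_sympl.
rewrite -(splitK k) -(splitK l).
case: (split k) => i; case: (split l) => j /=;
  rewrite ?dual_lshift ?dual_rshift ?eq_lrshift ?eq_rlshift ?AA ?BB ?AB //.
by rewrite iformC AB (inj_eq (@rshift_inj _ _)) eq_sym.
Qed.

Definition lincomb (s : H1 g) : H1 g := \sum_k s 0 k *: e k.

Lemma iform_lincomb_basis s l : iform (lincomb s) (e l) = s 0 (dual l).
Proof.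
rewrite iform_suml (bigD1 (dual l)) //= iform_basis eqxx mulr1 big1 ?addr0 //.
by move=> k /negbTE k_l; rewrite iform_basis k_l mulr0.
Qed.

Lemma lincomb_bij : bijective lincomb.
Proof.
apply: injF_bij => s t st; apply/rowP => k.
have := congr1 (fun v => iform v (e (dual k))) st.
by rewrite /= !iform_lincomb_basis dualK => ->.
Qed.

Lemma basis_indicator (T : {set 'I_(g + g)}) :
  exists y, forall k, i_fun (e k) y = (k \in T)%:R.
Proof.
exists (lincomb (\row_k (dual k \in T)%:R)) => k.
by rewrite i_funE iformC iform_lincomb_basis mxE dualK; case: (k \in T).
Qed.

Lemma i_fun_lincomb s y :
  i_fun (lincomb s) y =
  cubic (fun=> 1) (fun _ _ => - 2%:R) (fun _ _ _ => 4%:R)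
    (fun k => (s 0 k == 1)%:R * i_fun (e k) y).
Proof.
rewrite i_funE iform_suml F2_eq1_sum cubic_parity ?pchar_Zp //.
by apply: eq_cubic_var => k; rewrite F2_eq1M i_funE -natrM mulnb.
Qed.

End SymplecticBasis.

Section SatoImage.
Variables (g : nat) (q : H1 g -> 'F_2).

Definition sgnq (C : H1 g) : 'Z_8 := if q C == 1 then -1 else 1.

Lemma sgnqK C : sgnq C * sgnq C = 1.
Proof. by rewrite /sgnq; case: ifP => _; rewrite ?mulrNN mulr1. Qed.

Lemma CbarE C y : Cbar q C y = sgnq C * i_fun C y.
Proof. by []. Qed.

Lemma i_fun_in_span C : in_span (Cbar q) (i_fun C).
Proof.
apply: in_span_ext (in_span_scale (sgnq C) (in_span_gen (Cbar q) C)) => y.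
by rewrite CbarE mulrA sgnqK mul1r.
Qed.

Lemma i_fun_sum_in_span (s : seq ('Z_8 * H1 g)) :
  in_span (Cbar q) (fun y => \sum_(m <- s) m.1 * i_fun m.2 y).
Proof. by apply: in_span_sum => m _; apply: in_span_scale; exact: i_fun_in_span. Qed.

Lemma Cbar2_in_span X Y : in_span (Cbar q) (fun y => 2%:R * (Cbar q X y * Cbar q Y y)).
Proof.
pose r := sgnq X * sgnq Y.
apply: in_span_ext (i_fun_sum_in_span [:: (r, X); (r, Y); (- r, X + Y)]) => y.
by rewrite !big_cons big_nil /= !CbarE i_funD /r; ring.
Qed.

Lemma Cbar3_in_span X Y Z :
  in_span (Cbar q) (fun y => 4%:R * (Cbar q X y * Cbar q Y y * Cbar q Z y)).
Proof.
pose r := sgnq X * sgnq Y * sgnq Z.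
apply: in_span_ext (i_fun_sum_in_span [:: (r, X + Y + Z); (- r, X + Y); (- r, X + Z);
  (- r, Y + Z); (r, X); (r, Y); (r, Z)]) => y.
by rewrite !big_cons big_nil /= !CbarE !i_funD /r; ring.
Qed.

Variable e : 'I_(g + g) -> H1 g.

Lemma combo_in_span a b c : in_span (Cbar q) (combo q e a b c).
Proof.
apply: in_span_add; first apply: in_span_add.
- by apply: in_span_sum => i _; apply: in_span_scale; exact: in_span_gen.
- apply: in_span_sum => i _; apply: in_span_sum => j _; apply: in_span_scale.
  exact: Cbar2_in_span.
- apply: in_span_sum => i _; apply: in_span_sum => j _; apply: in_span_sum => k _.
  apply: in_span_scale; exact: Cbar3_in_span.
Qed.

Lemma combo_cubic a b c y :
  combo q e a b c y =
  cubic a (fun i j => b i j * 2%:R) (fun i j k => c i j k * 4%:R) (fun k => Cbar q (e k) y).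
Proof.
rewrite /combo /cubic; congr (_ + _ + _).
- by apply: eq_bigr => i _; apply: eq_bigr => j _; rewrite /gen2; ring.
- by do 3![apply: eq_bigr => ? _]; rewrite /gen3; ring.
Qed.

Lemma combo_suml J (s : seq J) (r : J -> 'Z_8) a b c y :
  \sum_(m <- s) r m * combo q e (a m) (b m) (c m) y =
  combo q e (fun i => \sum_(m <- s) r m * a m i) (fun i j => \sum_(m <- s) r m * b m i j)
    (fun i j k => \sum_(m <- s) r m * c m i j k) y.
Proof.
under eq_bigr do rewrite combo_cubic; rewrite cubic_suml combo_cubic.
by apply: eq_cubic => // *; rewrite mulr_suml; apply: eq_bigr => m _; rewrite mulrA.
Qed.

Definition signed_coord (s : H1 g) (k : 'I_(g + g)) : 'Z_8 :=
  (s 0 k == 1)%:R * sgnq (e k).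

Lemma Cbar_lincomb s y :
  Cbar q (lincomb e s) y =
  combo q e (fun i => sgnq (lincomb e s) * signed_coord s i)
    (fun i j => - (sgnq (lincomb e s) * (signed_coord s i * signed_coord s j)))
    (fun i j k => sgnq (lincomb e s) * (signed_coord s i * signed_coord s j * signed_coord s k)) y.
Proof.
rewrite CbarE i_fun_lincomb combo_cubic.
rewrite (eq_cubic_var _ _ _ (x' := fun k => signed_coord s k * Cbar q (e k) y)); last first.
  by move=> k; rewrite CbarE /signed_coord -mulrA (mulrA (sgnq _)) sgnqK mul1r.
by rewrite cubic_scale_r cubic_scale_l; apply: eq_cubic => *; ring.
Qed.

Definition combo_span (f : Map g) := exists a b c, forall y, f y = combo q e a b c y.

Hypothesis e_sympl : symplectic_basis e.

Lemma in_span_combo_span f : in_span (Cbar q) f -> combo_span f.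
Proof.
move=> [a fE]; do 3!eexists; move=> y.
rewrite fE (reindex (lincomb e)) /=; last exact/onW_bij/lincomb_bij.
under eq_bigr do rewrite Cbar_lincomb; exact: combo_suml.
Qed.

Lemma combo_direct a b c : (forall y, combo q e a b c y = 0) ->
  (forall (i : 'I_(g + g)) y, a i * gen1 q e i y = 0) /\
  (forall i j : 'I_(g + g), (i < j)%N -> forall y, b i j * gen2 q e i j y = 0) /\
  (forall i j k : 'I_(g + g), (i < j)%N -> (j < k)%N -> forall y,
     c i j k * gen3 q e i j k y = 0).
Proof.
pose eps k := sgnq (e k).
move=> combo0; have [T|a0 b0 c0] := cubic_indicator_eq0 (a := fun i => a i * eps i)
  (b := fun i j => b i j * 2%:R * (eps i * eps j))
  (c := fun i j k => c i j k * 4%:R * (eps i * eps j * eps k)).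
  have [y yT] := basis_indicator e_sympl T.
  rewrite -(combo0 y) combo_cubic -cubic_scale_r.
  by apply: eq_cubic_var => k; rewrite CbarE yT.
split; first by move=> i y; rewrite /gen1 CbarE mulrA a0 mul0r.
split=> [i j ij y | i j k ij jk y].
  have -> : b i j * gen2 q e i j y =
    b i j * 2%:R * (eps i * eps j) * (i_fun (e i) y * i_fun (e j) y).
    by rewrite /gen2 !CbarE /eps; ring.
  by rewrite b0 ?mul0r.
have -> : c i j k * gen3 q e i j k y =
  c i j k * 4%:R * (eps i * eps j * eps k) * (i_fun (e i) y * i_fun (e j) y * i_fun (e k) y).
  by rewrite /gen3 !CbarE /eps; ring.
by rewrite c0 ?mul0r.
Qed.

Lemma Z8_natr_eq0 k : ((k%:R : 'Z_8) = 0) <-> (8 %| k)%N.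
Proof. by rewrite /dvdn -val_Zp_nat //; split=> [->|/eqP k0] //; apply: val_inj. Qed.

Lemma has_order_witness (v : Map g) m d y0 (s : 'Z_8) :
  (d * m = 8)%N -> s * s = 1 -> v y0 = s * d%:R -> (forall y, v y *+ m = 0) ->
  has_order v m.
Proof.
move=> dm ss vy0 vm n; split=> [vn | /dvdnP[k ->] y]; last by rewrite mulnC mulrnA vm mul0rn.
have /Z8_natr_eq0 : (d * n)%:R = 0 :> 'Z_8.
  have := congr1 (fun z => s * z) (vn y0).
  by rewrite /= vy0 mulr0 -mulrnAr mulrA ss mul1r -mulr_natr -natrM.
by rewrite -dm dvdn_pmul2l //; case: d dm {vy0}.
Qed.

Lemma gen1_order i : has_order (gen1 q e i) 8.
Proof.
have [y1 y1E] := basis_indicator e_sympl setT.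
apply: (has_order_witness (d := 1) (y0 := y1) (s := sgnq (e i))) => //.
- exact: sgnqK.
- by rewrite /gen1 CbarE y1E inE.
- by move=> y; rewrite -mulr_natr pchar_Zp // mulr0.
Qed.

Lemma gen2_order i j : has_order (gen2 q e i j) 4.
Proof.
have [y1 y1E] := basis_indicator e_sympl setT.
apply: (has_order_witness (d := 2) (y0 := y1) (s := sgnq (e i) * sgnq (e j))) => //.
- by rewrite mulrACA !sgnqK mulr1.
- by rewrite /gen2 !CbarE !y1E !inE /= mulr1n; ring.
- by move=> y; rewrite /gen2 -mulrnAl -mulrnA pchar_Zp // mul0r.
Qed.

Lemma gen3_order i j k : has_order (gen3 q e i j k) 2.
Proof.
have [y1 y1E] := basis_indicator e_sympl setT.
apply: (has_order_witness (d := 4) (y0 := y1)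
  (s := sgnq (e i) * sgnq (e j) * sgnq (e k))) => //.
- by rewrite mulrACA sgnqK mulr1 mulrACA !sgnqK mulr1.
- by rewrite /gen3 !CbarE !y1E !inE /= mulr1n; ring.
- by move=> y; rewrite /gen3 -mulrnAl -mulrnA pchar_Zp // mul0r.
Qed.

End SatoImage.

Theorem mainTheorem11 (g : nat) (hg : (2 <= g)%N) (q : H1 g -> 'F_2)
  (e : 'I_(g + g) -> H1 g) :
  quad_form q -> symplectic_basis e ->
  (forall f : Map g, span_Cbar q f <->
     exists a b c, forall y, f y = combo q e a b c y) /\
  (forall a b c, (forall y, combo q e a b c y = 0) ->
     (forall (i : 'I_(g + g)) y, a i * gen1 q e i y = 0) /\
     (forall i j : 'I_(g + g), (i < j)%N -> forall y, b i j * gen2 q e i j y = 0) /\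
     (forall i j k : 'I_(g + g), (i < j)%N -> (j < k)%N -> forall y, c i j k * gen3 q e i j k y = 0)) /\
  (forall i : 'I_(g + g), has_order (gen1 q e i) 8) /\
  (forall i j : 'I_(g + g), (i < j)%N -> has_order (gen2 q e i j) 4) /\
  (forall i j k : 'I_(g + g), (i < j)%N -> (j < k)%N -> has_order (gen3 q e i j k) 2).
Proof.
(* [span_Cbar q] is [in_span (Cbar q)] unfolded. *)
move=> _ e_sympl; split.
  move=> f; split; first exact: in_span_combo_span.
  by move=> [a [b [c fE]]]; apply: in_span_ext fE (combo_in_span q e a b c).
split; first exact: combo_direct.
split; first exact: gen1_order.
by split=> [i j _ | i j k _ _]; [exact: gen2_order | exact: gen3_order].
Qed.
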